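(* Let $\delta>0$, $K\ge 2$, and let $\Lambda_1,\ldots,\Lambda_K\subset\mathbb{C}$ be regular QAM constellations with zero mean and minimum distances $d_{\min}(\Lambda_k)=\delta$ for all $k\in\{1,\ldots,K\}$. Then the superimposed constellation $$\Lambda=\Lambda_1+\sum_{k=2}^{K}2^{\frac{\sum_{i=1}^{k-1}\log|\Lambda_i|}{2}}\Lambda_k=\Big\{x_1+\sum_{k=2}^K 2^{\frac{\sum_{i=1}^{k-1}\log|\Lambda_i|}{2}}x_k : x_k\in\Lambda_k\Big\}$$ is a regular QAM with zero mean, $d_{\min}(\Lambda)=\delta$, and cardinality $|\Lambda|=\prod_{k=1}^K|\Lambda_k|$.
   Context: Logarithms are base 2, so $2^{\frac{\sum_{i<k}\log|\Lambda_i|}{2}}=\sqrt{\prod_{i<k}|\Lambda_i|}$. A regular QAM with cardinality $L^2$ ($L\ge 2$ an integer) and minimum distance $\delta$ is the set $\{(a+\mathrm{i}b)\delta : a,b\in\{-\tfrac{L-1}{2},-\tfrac{L-1}{2}+1,\ldots,\tfrac{L-1}{2}\}\}\subset\mathbb{C}$. The minimum distance $d_{\min}(\Lambda)$ is the smallest Euclidean distance between two distinct points of $\Lambda$. *)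

From HB Require Import structures.
From mathcomp Require Import all_boot all_order all_algebra.
From mathcomp Require Import finmap.
From mathcomp Require Import complex.
Set Implicit Arguments. Unset Strict Implicit. Unset Printing Implicit Defensive.
Import Order.TTheory GRing.Theory Num.Theory.
Local Open Scope ring_scope.
Local Open Scope fset_scope.
Local Open Scope complex_scope.

Definition cdist (R : rcfType) (x y : R[i]) : R := Normc.normc (x - y).

(* The regular QAM of cardinality L^2 with minimum distance delta:
   { (a + i b) delta : a, b in {-(L-1)/2, ..., (L-1)/2} }.
   Here a = u - (L-1)/2 with u in {0,..,L-1} (iota 0 L). *)
Definition QAM (R : rcfType) (L : nat) (delta : R) : {fset R[i]} :=
  [fset (Complex ((u%:R - (L%:R - 1) / 2) * delta)
                 ((v%:R - (L%:R - 1) / 2) * delta) : R[i])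
     | u in iota 0 L, v in iota 0 L].

Definition is_regular_QAM (R : rcfType) (A : {fset R[i]}) : Prop :=
  exists (L : nat) (delta : R), (2 <= L)%N /\ 0 < delta /\ A = QAM L delta.

Definition cmean (R : rcfType) (A : {fset R[i]}) : R[i] :=
  (\sum_(x <- A) x) / (#|` A|)%:R.

Definition is_dmin (R : rcfType) (A : {fset R[i]}) (d : R) : Prop :=
  (exists x y, [/\ x \in A, y \in A, x != y & cdist x y = d]) /\
  (forall x y, x \in A -> y \in A -> x != y -> d <= cdist x y).

(* scaling factor of the k-th layer:
   2^{(sum_{i=1}^{k-1} log2 |Lambda_i|)/2} = sqrt (prod_{i=1}^{k-1} |Lambda_i|) *)
Definition layer_scale (R : rcfType) (Lam : nat -> {fset R[i]}) (k : nat) : R[i] :=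
  (Num.sqrt ((\prod_(1 <= i < k) #|` Lam i|)%N%:R : R))%:C.

(* superimposed constellation of layers 1..K:
   superpose Lam 1 = Lam 1,
   superpose Lam (k+1) = superpose Lam k + scale_(k+1) * Lam (k+1),
   so superpose Lam K = { x_1 + sum_{k=2}^K scale_k x_k : x_k in Lam k }. *)
Fixpoint superpose (R : rcfType) (Lam : nat -> {fset R[i]}) (K : nat) : {fset R[i]} :=
  match K with
  | 0 => fset0
  | 1 => Lam 1%N
  | k.+1 => [fset (x + layer_scale Lam k.+1 * y)%R
               | x in superpose Lam k, y in Lam k.+1]
  end.

(* A regular QAM with L^2 points and step d is the product of two copies of
   the centred PAM { (u - (L-1)/2) d : u < L }, and its minimum distance is d,
   so the hypotheses say that every layer is such a QAM with the common step
   delta.  Writing U = u + N u' in mixed radix shows that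
   N-PAM + N * (L-PAM) = (N L)-PAM; hence adding an N^2-point QAM to an
   L^2-point QAM scaled by N = sqrt(N^2) yields the (N L)^2-point QAM with the
   same step.  By induction the superposition is the QAM whose side is the
   product of the sides of the layers; like every regular QAM it is centred,
   by the symmetry u |-> L-1-u, and has minimum distance delta. *)

From mathcomp Require Import all_boot all_order all_algebra.
From mathcomp Require Import finmap.
From mathcomp Require Import complex.
From mathcomp Require Import ring lra zify.
Import Order.TTheory GRing.Theory Num.Theory.
Set Implicit Arguments. Unset Strict Implicit.
Local Open Scope fset_scope.
Local Open Scope complex_scope.
Local Open Scope ring_scope.

Section RegularQAM.
Variable R : rcfType.
Implicit Types (d : R) (L N u v : nat).

Definition pam L d u : R := (u%:R - (L%:R - 1) / 2) * d.

Definition qam_point L d u v : R[i] := Complex (pam L d u) (pam L d v).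

Lemma pam_inj L d : d != 0 -> injective (pam L d).
Proof. by move=> d0 u u' /(mulIf d0)/addIr/eqP; rewrite eqr_nat => /eqP. Qed.

Lemma pam_rev L d u : (u < L)%N -> pam L d (L - u.+1) = - pam L d u.
Proof. by move=> uL; rewrite /pam natrB // (mulrSr 1 u); field. Qed.

Lemma pam_sub L d u u' : pam L d u - pam L d u' = (u%:R - u'%:R) * d.
Proof. by rewrite /pam; ring. Qed.

Lemma pam_superpose N L d u u' :
  pam N d u + N%:R * pam L d u' = pam (N * L) d (u + N * u').
Proof. by rewrite /pam !natrD !natrM; field. Qed.

Lemma qam_point_inj L d u v u' v' : d != 0 ->
  qam_point L d u v = qam_point L d u' v' -> u = u' /\ v = v'.
Proof. by move=> d0 [/(pam_inj d0) -> /(pam_inj d0) ->]. Qed.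

Lemma mem_QAM L d z :
  reflect (exists u v, [/\ (u < L)%N, (v < L)%N & z = qam_point L d u v])
          (z \in QAM L d).
Proof.
apply: (iffP (imfset2P _ _ _ _ _)) => [[u uL [v vL ->]]|[u [v [uL vL ->]]]].
  by move: uL vL; rewrite /= !mem_iota => uL vL; exists u, v.
by exists u; rewrite /= ?mem_iota //; exists v; rewrite /= ?mem_iota.
Qed.

Lemma big_QAM (V : nmodType) L d (F : R[i] -> V) : d != 0 ->
  \sum_(z <- QAM L d) F z =
  \sum_(0 <= u < L) \sum_(0 <= v < L) F (qam_point L d u v).
Proof.
move=> d0; rewrite big_imfset2 /=; last first.
  by move=> [u v] [u' v'] _ _ /= /(qam_point_inj d0) [-> ->].
by rewrite undup_id ?iota_uniq // /index_iota subn0.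
Qed.

Lemma card_QAM L d : d != 0 -> #|` QAM L d| = (L * L)%N.
Proof.
move=> d0; rewrite card_fset_sum1 (big_QAM _ _ d0).
under eq_bigr do rewrite sum_nat_const_nat muln1 subn0.
by rewrite sum_nat_const_nat subn0.
Qed.

Lemma cmean_QAM L d : d != 0 -> cmean (QAM L d) = 0.
Proof.
move=> d0; rewrite /cmean (big_QAM _ _ d0).
set S := \sum_(0 <= u < L) _.
suff /eqP : S = - S by rewrite -subr_eq0 opprK -mulr2n mulrn_eq0 => /eqP ->; rewrite mul0r.
rewrite {1}/S big_nat_rev -sumrN; apply: eq_big_nat => u /andP[_ uL].
rewrite big_nat_rev -sumrN; apply: eq_big_nat => v /andP[_ vL].
by rewrite !add0n /qam_point !pam_rev.
Qed.

Lemma cdist_qam_point L d u v u' v' :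
  cdist (qam_point L d u v) (qam_point L d u' v') =
  Num.sqrt (((u%:R - u'%:R) * d) ^+ 2 + ((v%:R - v'%:R) * d) ^+ 2).
Proof. by rewrite /cdist /Normc.normc /= !pam_sub. Qed.

Lemma natr_sub_sqr_ge1 u u' : u != u' -> 1 <= (u%:R - u'%:R : R) ^+ 2.
Proof.
case: ltngtP => // [uu'|u'u] _.
- have : u.+1%:R <= u'%:R :> R by rewrite ler_nat.
  by rewrite (mulrSr 1 u) => ?; nra.
- have : u'.+1%:R <= u%:R :> R by rewrite ler_nat.
  by rewrite (mulrSr 1 u') => ?; nra.
Qed.

Lemma cdist_qam_point_ge L d u v u' v' : 0 < d -> (u, v) != (u', v') ->
  d <= cdist (qam_point L d u v) (qam_point L d u' v').
Proof.
move=> d_gt0 neq; rewrite cdist_qam_point.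
rewrite -[X in X <= _](ger0_norm (ltW d_gt0)) -sqrtr_sqr.
rewrite ler_sqrt ?addr_ge0 ?sqr_ge0 // !exprMn -mulrDl.
apply: ler_peMl; first exact: sqr_ge0.
have := sqr_ge0 (u%:R - u'%:R : R); have := sqr_ge0 (v%:R - v'%:R : R).
by rewrite xpair_eqE negb_and in neq; case/orP: neq => /natr_sub_sqr_ge1; lra.
Qed.

Lemma is_dmin_QAM L d : 0 < d -> (2 <= L)%N -> is_dmin (QAM L d) d.
Proof.
move=> d_gt0 L2; split=> [|_ _ /mem_QAM[u [v [_ _ ->]]] /mem_QAM[u' [v' [_ _ ->]]] neq].
  exists (qam_point L d 0 0), (qam_point L d 1 0); split.
  - by apply/mem_QAM; exists 0%N, 0%N; split => //; apply: ltnW.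
  - by apply/mem_QAM; exists 1%N, 0%N; split => //; apply: ltnW.
  - by apply/eqP => /(qam_point_inj (lt0r_neq0 d_gt0)) [].
  - rewrite cdist_qam_point subrr mul0r expr0n addr0 sqrtr_sqr.
    by rewrite sub0r mulN1r normrN gtr0_norm.
by apply: cdist_qam_point_ge => //; apply: contraNneq neq => -[-> ->].
Qed.

Lemma qam_point_superpose N L d u v u' v' :
  qam_point N d u v + (N%:R)%:C * qam_point L d u' v' =
  qam_point (N * L) d (u + N * u') (v + N * v').
Proof.
apply/eqP; rewrite eq_complex /= !mul0r subr0 addr0.
by rewrite -!pam_superpose !eqxx.
Qed.

Lemma QAM_add_scaled N L d : (0 < N)%N -> (0 < L)%N ->
  [fset x + (N%:R)%:C * y | x in QAM N d, y in QAM L d] = QAM (N * L) d.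
Proof.
move=> N_gt0 L_gt0; apply/fsetP => z; apply/imfset2P/mem_QAM.
  move=> [_ /mem_QAM[u [v [uN vN ->]]] [_ /mem_QAM[u' [v' [uL vL ->]]] ->]].
  by exists (u + N * u')%N, (v + N * v')%N; rewrite qam_point_superpose; split; [nia | nia |].
move=> [U [V [UNL VNL ->]]].
exists (qam_point N d (U %% N) (V %% N)).
  by apply/mem_QAM; exists (U %% N)%N, (V %% N)%N; rewrite !ltn_pmod.
exists (qam_point L d (U %/ N) (V %/ N)).
  by apply/mem_QAM; exists (U %/ N)%N, (V %/ N)%N; rewrite !ltn_divLR // ![(_ * N)%N]mulnC.
by rewrite qam_point_superpose ![(N * (_ %/ N))%N]mulnC addnC -divn_eq addnC -divn_eq.
Qed.

Lemma is_dmin_unique (A : {fset R[i]}) (d d' : R) :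
  is_dmin A d -> is_dmin A d' -> d = d'.
Proof.
move=> [[x [y [xA yA xy <-]]] lb] [[x' [y' [xA' yA' xy' <-]]] lb'].
by apply/eqP; rewrite eq_le lb ?lb'.
Qed.

Lemma regular_QAM_dmin (A : {fset R[i]}) (delta : R) :
  is_regular_QAM A -> is_dmin A delta -> exists2 L, (2 <= L)%N & A = QAM L delta.
Proof.
move=> [L [d [L2 [d_gt0 ->]]]] dmin; exists L => //.
by rewrite (is_dmin_unique (is_dmin_QAM d_gt0 L2) dmin).
Qed.

Lemma layer_scale_sqr (Lam : nat -> {fset R[i]}) k N :
  (N * N = \prod_(1 <= i < k) #|` Lam i|)%N -> layer_scale Lam k = (N%:R)%:C.
Proof. by move=> eN; rewrite /layer_scale -eN natrM -expr2 sqrtr_sqr ger0_norm. Qed.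

Lemma superpose_QAM (delta : R) (Lam : nat -> {fset R[i]}) K :
  0 < delta -> (1 <= K)%N ->
  (forall k, (1 <= k <= K)%N -> exists2 L, (2 <= L)%N & Lam k = QAM L delta) ->
  exists N, [/\ (2 <= N)%N, superpose Lam K = QAM N delta &
                (N * N = \prod_(1 <= k < K.+1) #|` Lam k|)%N].
Proof.
move=> d_gt0; have d_neq0 := lt0r_neq0 d_gt0.
elim: K => [//|[|K] IH] _ layers.
  have [L L2 eL] := layers 1%N isT.
  by exists L; rewrite big_nat1 eL card_QAM.
have [|N [N2 eN cardN]] := IH isT.
  by move=> k /andP[k1 kK]; apply: layers; rewrite k1 ltnW.
have [L L2 eL] := layers K.+2 (leqnn _).
exists (N * L)%N; split.
- by rewrite (leq_trans N2) // leq_pmulr // ltnW.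
- rewrite /= -/(superpose Lam K.+1) eN eL (layer_scale_sqr cardN).
  by rewrite QAM_add_scaled // ltnW.
- by rewrite big_nat_recr //= -cardN eL card_QAM // mulnACA.
Qed.

End RegularQAM.

Unset Implicit Arguments.
Local Open Scope fset_scope.

Theorem lemma2 (R : rcfType) (delta : R) (K : nat) (Lam : nat -> {fset R[i]}) :
  0 < delta -> (2 <= K)%N ->
  (forall k, (1 <= k <= K)%N ->
     [/\ is_regular_QAM (Lam k), cmean (Lam k) = 0 & is_dmin (Lam k) delta]) ->
  [/\ is_regular_QAM (superpose Lam K), cmean (superpose Lam K) = 0,
      is_dmin (superpose Lam K) delta &
      #|` superpose Lam K| = (\prod_(1 <= k < K.+1) #|` Lam k|)%N].
Proof.
move=> d_gt0 K2 layers.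
have [|N [N2 -> cardN]] := @superpose_QAM R delta Lam K d_gt0 (ltnW K2).
  by move=> k /layers[regular _ dmin]; apply: regular_QAM_dmin.
split.
- by exists N, delta.
- exact/cmean_QAM/lt0r_neq0.
- exact: is_dmin_QAM.
- by rewrite card_QAM ?lt0r_neq0.
Qed.
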